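(* Let $M$ be any randomized implementation of a TAS object for two processes from registers, and let $t\ge0$ be an integer. Then there is an oblivious adversary $A$ (i.e., a fixed schedule) such that, in the random execution in which both processes call $\mathrm{TAS}()$ and are scheduled by $A$, with probability at least $4^{-t}$ some process executes at least $t$ shared-memory steps during its $\mathrm{TAS}()$ call.
   Context: Model. Two processes in an asynchronous shared-memory system communicate via atomic read/write registers. Algorithms are randomized: a coin flip is a private local step returning a value drawn from a fixed distribution on a countable set $\Omega$; w.l.o.g. each process alternates coin-flip steps and shared-memory (read or write) steps, starting with a coin flip. An oblivious adversary fixes the entire schedule (the sequence of process IDs taking steps) in advance, independently of coin flips; a finished process takes no further steps. A TAS object stores a bit, initially $0$, and supports a one-time operation $\mathrm{TAS}()$ that sets the bit and returns its previous value; the implementation must be linearizable, so in any execution where both calls complete exactly one returns $0$. *)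

From Stdlib Require Import Reals ClassicalEpsilon Bool Arith.
Open Scope R_scope.
Set Implicit Arguments.

(** Processes are identified by [bool] ([false] = p0, [true] = p1).
    TAS return values: [false] = 0, [true] = 1. *)

(** Shared-memory operations (decided by the local state right after a coin
    flip); [ORet b] means the process returns [b] from TAS() and finishes. *)
Inductive Op (Reg Val : Type) : Type :=
| ORead (r : Reg)
| OWrite (r : Reg) (v : Val)
| ORet (b : bool).
Arguments ORead {Reg Val}.
Arguments OWrite {Reg Val}.
Arguments ORet {Reg Val}.

(** Each process alternates coin-flip steps and shared-memory steps, starting
    with a coin flip.  In a coin-flip step, process [p] in local state [s]
    obtains [w : Omega] and moves to [coin p s w]; its next operation is then
    [nextop p (coin p s w)] (if this is [ORet b] the TAS() call returns [b]
    and the process takes no further steps).  A read of [r] returning [v]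
    moves the state [s] to [onread p s v]; a write leaves the local state
    unchanged (it was determined by the state). *)
Record TASImpl : Type := {
  Omega : Type;
  enumO : nat -> option Omega;        (* Omega is countable *)
  mu : Omega -> R;                    (* the fixed coin distribution *)
  Reg : Type;
  reg_eq_dec : forall x y : Reg, {x = y} + {x <> y};
  Val : Type;
  reg_init : Reg -> Val;
  Loc : Type;
  loc_init : bool -> Loc;
  coin : bool -> Loc -> Omega -> Loc;
  nextop : bool -> Loc -> Op Reg Val;
  onread : bool -> Loc -> Val -> Loc
}.

Definition valid_coins (M : TASImpl) : Prop :=
  (forall w, 0 <= mu M w) /\
  (forall w, exists n, enumO M n = Some w) /\
  (forall n m w, enumO M n = Some w -> enumO M m = Some w -> n = m) /\
  infinite_sum (fun n => match enumO M n with Some w => mu M w | None => 0 end) 1.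

Section Exec.
Variable M : TASImpl.

(** Phase of a process: about to flip a coin, about to perform a memory
    operation, or done with result [b]; [other] records whether the other
    process had invoked its TAS() (taken a step) when this one returned. *)
Inductive Phase : Type :=
| PCoin
| PMem (o : Op (Reg M) (Val M))
| PDone (b : bool) (other : bool).

Record Cfg : Type := {
  loc : bool -> Loc M;
  ph : bool -> Phase;
  mem : Reg M -> Val M;
  nmem : bool -> nat;     (* shared-memory steps executed so far *)
  ncoin : bool -> nat;    (* coin flips executed so far *)
  started : bool -> bool  (* has the process taken a step (invoked TAS) *)
}.

Definition upd {X : Type} (f : bool -> X) (p : bool) (x : X) : bool -> X :=
  fun q => if Bool.eqb q p then x else f q.

Definition init_cfg : Cfg :=
  {| loc := loc_init M; ph := fun _ => PCoin; mem := reg_init M;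
     nmem := fun _ => 0%nat; ncoin := fun _ => 0%nat;
     started := fun _ => false |}.

Definition coin_step (p : bool) (w : Omega M) (c : Cfg) : Cfg :=
  let s' := coin M p (loc c p) w in
  let ph' := match nextop M p s' with
             | ORet b => PDone b (started c (negb p))
             | o => PMem o end in
  {| loc := upd (loc c) p s'; ph := upd (ph c) p ph'; mem := mem c;
     nmem := nmem c; ncoin := upd (ncoin c) p (S (ncoin c p));
     started := upd (started c) p true |}.

Definition mem_step (p : bool) (c : Cfg) : Cfg :=
  match ph c p with
  | PMem (ORead r) =>
      {| loc := upd (loc c) p (onread M p (loc c p) (mem c r));
         ph := upd (ph c) p PCoin; mem := mem c;
         nmem := upd (nmem c) p (S (nmem c p)); ncoin := ncoin c;
         started := upd (started c) p true |}
  | PMem (OWrite r v) =>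
      {| loc := loc c; ph := upd (ph c) p PCoin;
         mem := fun r' => if reg_eq_dec M r' r then v else mem c r';
         nmem := upd (nmem c) p (S (nmem c p)); ncoin := ncoin c;
         started := upd (started c) p true |}
  | PMem (ORet b) =>  (* unreachable *)
      {| loc := loc c; ph := upd (ph c) p (PDone b (started c (negb p)));
         mem := mem c; nmem := nmem c; ncoin := ncoin c;
         started := upd (started c) p true |}
  | _ => c
  end.

Definition step (p : bool) (w : Omega M) (c : Cfg) : Cfg :=
  match ph c p with PCoin => coin_step p w c | _ => mem_step p c end.

(** A schedule: at time [i], [Some p] lets process [p] take a step,
    [None] is an idle slot (so finite schedules are included). *)
Definition Schedule := nat -> option bool.

(** Deterministic execution: [cs p k] is the outcome of the k-th coin flip
    of process [p]. *)
Fixpoint exec (sg : Schedule) (cs : bool -> nat -> Omega M) (n : nat) : Cfg :=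
  match n with
  | O => init_cfg
  | S k => let c := exec sg cs k in
           match sg k with
           | None => c
           | Some p => step p (cs p (ncoin c p)) c
           end
  end.

(** Linearizability of the (finite) history of one-shot TAS() calls, where
    process [p]'s call is invoked at its first step and responds at the step
    where it returns:
    - a call that responds before the other call is invoked returns 0;
    - if both calls have completed, exactly one returns 0. *)
Definition lin_ok (c : Cfg) : Prop :=
  (forall p b, ph c p = PDone b false -> b = false) /\
  (forall b0 o0 b1 o1, ph c false = PDone b0 o0 -> ph c true = PDone b1 o1 ->
     b0 <> b1).

End Exec.

Arguments PCoin {M}.

Definition is_TAS (M : TASImpl) : Prop :=
  valid_coins M /\
  forall (sg : Schedule) (cs : bool -> nat -> Omega M) (n : nat),
    lin_ok (exec M sg cs n).

Unset Implicit Arguments.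

Definition psum (f : nat -> R) : R :=
  epsilon (inhabits 0) (fun l => infinite_sum f l).

Definition Ecoin (M : TASImpl) (f : Omega M -> R) : R :=
  psum (fun n => match enumO M n with Some w => mu M w * f w | None => 0 end).

(** [pv M sg t n i c]: probability that, running the steps of [sg] at times
    [i, ..., i+n-1] from configuration [c] with fresh independent coins,
    some process has executed at least [t] shared-memory steps at the end. *)
Fixpoint pv (M : TASImpl) (sg : Schedule) (t : nat) (n i : nat) (c : Cfg M) : R :=
  match n with
  | O => if (t <=? nmem c false)%nat || (t <=? nmem c true)%nat then 1 else 0
  | S k =>
      match sg i with
      | None => pv M sg t k (S i) c
      | Some p =>
          match ph c p with
          | PCoin => Ecoin M (fun w => pv M sg t k (S i) (coin_step p w c))
          | _ => pv M sg t k (S i) (mem_step p c)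
          end
      end
  end.

Definition prob_by (M : TASImpl) (sg : Schedule) (t n : nat) : R :=
  pv M sg t n 0 (init_cfg M).

(** Fix the outcomes [cs] of all
    coin flips and let processes move in rounds (a coin flip followed by the
    shared-memory step it selects).  A valency argument on the value each
    process would return running solo shows that some sequence of at most [2t]
    rounds makes a process execute [t] memory steps: while both solo outcomes
    agree, a round that does not flip the other's outcome keeps the agreement,
    and if both pending operations flip it they are writes to distinct
    registers, which commute and flip the agreement (a return contradicts
    linearizability).  Padding gives a list of exactly [2t] rounds, hence one
    of [4^t] candidate schedules.

    Probabilistic part.  [pv] flips the coins in the order a schedule uses
    them; by exchanging the order of finitely many independent coins
    ([trunc_exp_front]) it dominates the truncated expectation over all
    coins of the deterministic indicator.  Summing over the candidates, the
    total success probability is at least the truncated expectation of a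
    function that is [>= 1] everywhere, hence at least [1] in the limit, and
    some candidate has probability at least [4^-t] ([good_candidate_exists]). *)

From Stdlib Require Import Reals Lia Lra List Bool.
From Stdlib Require Import FunctionalExtensionality Classical ClassicalEpsilon.
Open Scope R_scope.

Lemma upd_same {X : Type} (f : bool -> X) p x : upd f p x p = x.
Proof. unfold upd; rewrite eqb_reflx; auto. Qed.

Lemma neq_negb p : p <> negb p.
Proof. destruct p; discriminate. Qed.

Lemma bool_cases p (P : bool -> Prop) : P p -> P (negb p) -> forall q, P q.
Proof. destruct p, q; auto. Qed.

Lemma cv_const (x : R) : Un_cv (fun _ => x) x.
Proof.
  intros eps He; exists 0%nat; intros n _; unfold Rdist. rewrite Rminus_diag, Rabs_R0; lra.
Qed.

Lemma cv_pow (u : nat -> R) (l : R) (k : nat) : Un_cv u l -> Un_cv (fun n => u n ^ k) (l ^ k).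
Proof.
  intros H; induction k as [|k IH]; [exact (cv_const 1)|].
  exact (CV_mult _ _ _ _ H IH).
Qed.

Lemma pow_le1 x n : 0 <= x <= 1 -> 0 <= x ^ n <= 1.
Proof.
  intros H; induction n; simpl; [lra|]. split; [apply Rmult_le_pos; lra|].
  rewrite <- (Rmult_1_r 1). apply Rmult_le_compat; lra.
Qed.

Lemma sum_f_R0_swap (h : nat -> nat -> R) N N' :
  sum_f_R0 (fun i => sum_f_R0 (fun j => h i j) N') N =
  sum_f_R0 (fun j => sum_f_R0 (fun i => h i j) N) N'.
Proof.
  induction N as [|N IH]; simpl; [reflexivity|].
  rewrite IH, <- plus_sum; reflexivity.
Qed.

Fixpoint all_lists (m : nat) : list (list bool) :=
  match m with
  | O => nil :: nil
  | S m => map (cons false) (all_lists m) ++ map (cons true) (all_lists m)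
  end.

Lemma all_lists_complete l : In l (all_lists (length l)).
Proof.
  induction l as [|x l IH]; simpl; auto.
  apply in_or_app. destruct x; [right|left]; apply in_map; auto.
Qed.

Lemma all_lists_length m : length (all_lists m) = (2 ^ m)%nat.
Proof. induction m; simpl; auto. rewrite length_app, !length_map, IHm. lia. Qed.

Definition sum_list {X : Type} (F : list X) (g : X -> R) : R :=
  fold_right (fun l acc => g l + acc) 0 F.

Lemma sum_list_ge {X : Type} (F : list X) g l :
  (forall l, 0 <= g l) -> In l F -> g l <= sum_list F g.
Proof.
  intros H; induction F as [|x F IH]; simpl; [tauto|].
  assert (0 <= sum_list F g) by (clear IH; induction F; simpl; [lra|]; specialize (H a); lra).
  intros [E|E]; [subst; lra|]. specialize (IH E). specialize (H x). lra.
Qed.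

Lemma sum_list_le {X : Type} (F : list X) g h :
  (forall l, In l F -> g l <= h l) -> sum_list F g <= sum_list F h.
Proof.
  induction F as [|x F IH]; intros H; simpl; [lra|].
  apply Rplus_le_compat; [apply H; left | apply IH; intros; apply H; right]; auto.
Qed.

Lemma sum_list_average {X : Type} (F : list X) g :
  F <> nil -> 1 <= sum_list F g -> exists l, In l F /\ / INR (length F) <= g l.
Proof.
  intros Hne Hsum. apply NNPP; intros Hn.
  assert (Hlt : forall l, In l F -> g l < / INR (length F)).
  { intros l Hl. apply Rnot_le_lt. intros Hle. apply Hn. eauto. }
  assert (Hbound : sum_list F g < INR (length F) * / INR (length F)).
  { clear Hsum Hn. set (c := / INR (length F)) in *. clearbody c.
    induction F as [|x F IH]; [congruence|].
    destruct F as [|y F]; [simpl; specialize (Hlt x (or_introl eq_refl)); lra|].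
    assert (A := IH ltac:(congruence) (fun l Hl => Hlt l (or_intror Hl))).
    specialize (Hlt x (or_introl eq_refl)).
    replace (INR (length (x :: y :: F))) with (INR (length (y :: F)) + 1)
      by (rewrite <- S_INR; reflexivity).
    change (sum_list (x :: y :: F) g) with (g x + sum_list (y :: F) g). lra. }
  rewrite Rinv_r in Hbound; [lra|]. apply not_0_INR. destruct F; [congruence|discriminate].
Qed.

Section Rounds.

Context {M : TASImpl}.

(** The part of a configuration that process [p] can observe: its local
    state, its phase (up to the bookkeeping flag of [PDone]), the shared
    memory and its own step counters.  Its future behaviour depends only on
    this view. *)
Definition strip (x : Phase M) : Phase M :=
  match x with PDone _ b _ => PDone M b false | y => y end.

Definition view (p : bool) (c : Cfg M) :=
  (loc c p, strip (ph c p), mem c, nmem c p, ncoin c p).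

Definition private (p : bool) (c : Cfg M) :=
  (loc c p, ph c p, nmem c p, ncoin c p, started c p).

Definition write_mem (m : Reg M -> Val M) (r : Reg M) (x : Val M) : Reg M -> Val M :=
  fun r' => if reg_eq_dec M r' r then x else m r'.

Lemma write_mem_overwrite m r x y : write_mem (write_mem m r y) r x = write_mem m r x.
Proof.
  apply functional_extensionality; intros r'; unfold write_mem.
  destruct (reg_eq_dec M r' r); auto.
Qed.

Lemma write_mem_comm m r x r' x' :
  r <> r' -> write_mem (write_mem m r' x') r x = write_mem (write_mem m r x) r' x'.
Proof.
  intros H; apply functional_extensionality; intros y; unfold write_mem.
  destruct (reg_eq_dec M y r), (reg_eq_dec M y r'); subst; congruence.
Qed.

Lemma step_view p w (c d : Cfg M) :
  view p c = view p d -> view p (step p w c) = view p (step p w d).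
Proof.
  unfold view; intros H; injection H; clear H; intros H5 H4 H3 H2 H1.
  destruct c as [l1 ph1 m1 n1 k1 s1], d as [l2 ph2 m2 n2 k2 s2]; simpl in *; subst.
  unfold step, coin_step, mem_step; simpl.
  destruct p; simpl;
  destruct (ph1 _) as [ | o1 | b1 x1] eqn:E1; destruct (ph2 _) as [ | o2 | b2 x2] eqn:E2;
    simpl in H2; try discriminate; simpl; rewrite ?E1, ?E2; simpl; unfold upd; simpl;
    rewrite ?H1, ?H4, ?H5;
  try (destruct (nextop M _ _); reflexivity);
  try (injection H2; intros; subst; destruct o2; simpl; rewrite ?H1, ?H4, ?H5; reflexivity);
  try (injection H2; intros; subst; reflexivity).
Qed.

Lemma step_private_other p w (c : Cfg M) :
  private (negb p) (step p w c) = private (negb p) c.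
Proof.
  destruct c as [l1 ph1 m1 n1 k1 s1]; destruct p; unfold step, coin_step, mem_step; simpl;
  destruct (ph1 _) as [ | o | b x]; simpl; try destruct o; simpl; auto.
Qed.

Lemma step_nmem p w (c : Cfg M) q : (nmem c q <= nmem (step p w c) q)%nat.
Proof.
  destruct c as [l1 ph1 m1 n1 k1 s1]; unfold step, coin_step, mem_step; simpl;
  destruct (ph1 p) as [ | o | b x]; simpl; try destruct o; simpl; unfold upd;
  try destruct (eqb q p) eqn:E; try apply eqb_prop in E; subst; auto.
Qed.

Lemma mem_step_ncoin p (c : Cfg M) : ncoin (mem_step p c) = ncoin c.
Proof.
  destruct c as [l1 ph1 m1 n1 k1 s1]; unfold mem_step; simpl.
  destruct (ph1 p) as [ | o | b x]; simpl; try destruct o; simpl; auto.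
Qed.

Variable cs : bool -> nat -> Omega M.

(** A round of [p]: its next two steps with its next coins from [cs].  From a
    coin phase this is a coin flip followed by the chosen shared-memory step
    (or by nothing, if the flip made [p] return). *)
Definition round (p : bool) (c : Cfg M) : Cfg M :=
  let c1 := step p (cs p (ncoin c p)) c in step p (cs p (ncoin c1 p)) c1.

Definition rounds (l : list bool) (c : Cfg M) : Cfg M :=
  fold_left (fun c p => round p c) l c.

Definition solo (p : bool) (n : nat) (c : Cfg M) : Cfg M := rounds (repeat p n) c.

Definition next_op (p : bool) (c : Cfg M) : Op (Reg M) (Val M) :=
  nextop M p (coin M p (loc c p) (cs p (ncoin c p))).

Definition solo_outcome (t : nat) (p : bool) (c : Cfg M) : option bool :=
  match ph (solo p (t - nmem c p) c) p with PDone _ b _ => Some b | _ => None end.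

Lemma solo_S p n c : solo p (S n) c = solo p n (round p c).
Proof. reflexivity. Qed.

Lemma rounds_app l1 l2 c : rounds (l1 ++ l2) c = rounds l2 (rounds l1 c).
Proof. apply fold_left_app. Qed.

Lemma rounds_snoc l p c : rounds (l ++ p :: nil) c = round p (rounds l c).
Proof. apply fold_left_app. Qed.

Lemma round_view p (c d : Cfg M) :
  view p c = view p d -> view p (round p c) = view p (round p d).
Proof.
  intros H. unfold round.
  assert (Hk : ncoin c p = ncoin d p) by (injection H; auto).
  rewrite Hk.
  assert (H1 := step_view p (cs p (ncoin d p)) c d H).
  assert (Hk1 : ncoin (step p (cs p (ncoin d p)) c) p = ncoin (step p (cs p (ncoin d p)) d) p)
    by (injection H1; auto).
  rewrite Hk1. apply step_view; auto.
Qed.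

Lemma solo_outcome_view t p (c d : Cfg M) :
  view p c = view p d -> solo_outcome t p c = solo_outcome t p d.
Proof.
  intros H. unfold solo_outcome.
  assert (Hn : nmem c p = nmem d p) by (injection H; auto).
  rewrite Hn. generalize (t - nmem d p)%nat; intros n.
  assert (Hs : view p (solo p n c) = view p (solo p n d)).
  { clear Hn; revert c d H; induction n; intros c d H; [exact H|].
    rewrite !solo_S; apply IHn, round_view, H. }
  injection Hs; intros _ _ _ E _.
  destruct (ph (solo p n c) p), (ph (solo p n d) p); simpl in E; try discriminate; auto.
  injection E; intros; subst; auto.
Qed.

Lemma round_private_other p q c : q <> p -> private q (round p c) = private q c.
Proof.
  intros H. assert (E : q = negb p) by (destruct p, q; simpl; congruence). subst q.
  unfold round; rewrite !step_private_other; auto.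
Qed.

Lemma round_nmem p c q : (nmem c q <= nmem (round p c) q)%nat.
Proof. unfold round; eapply Nat.le_trans; apply step_nmem. Qed.

Lemma rounds_nmem l c q : (nmem c q <= nmem (rounds l c) q)%nat.
Proof.
  revert c; induction l; intros c; simpl; auto.
  eapply Nat.le_trans; [apply (round_nmem a c q) | apply IHl].
Qed.

Lemma round_view_other p q c :
  q <> p -> mem (round p c) = mem c -> view q (round p c) = view q c.
Proof.
  intros Hq H. assert (E := round_private_other p q c Hq). injection E; intros _ A4 A3 A2 A1.
  unfold view. rewrite A1, A2, A3, A4, H. auto.
Qed.

Lemma next_op_other p q c : q <> p -> next_op q (round p c) = next_op q c.
Proof.
  intros Hq. unfold next_op.
  assert (E := round_private_other p q c Hq). injection E; intros _ A4 _ _ A1.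
  rewrite A1, A4; auto.
Qed.

Lemma solo_private_other p q n c : q <> p -> private q (solo p n c) = private q c.
Proof.
  intros Hq; revert c; induction n; intros c; [reflexivity|].
  rewrite solo_S, IHn; apply round_private_other, Hq.
Qed.

Lemma round_done p c b o : ph c p = PDone M b o -> round p c = c.
Proof. intros H. unfold round, step. rewrite H. unfold mem_step. rewrite H. rewrite H. auto. Qed.

Lemma solo_done p n c b o : ph c p = PDone M b o -> solo p n c = c.
Proof. intros H; induction n; [reflexivity|]. rewrite solo_S, (round_done p c b o H). auto. Qed.

Lemma round_read p c r :
  ph c p = PCoin -> next_op p c = ORead r ->
  ph (round p c) p = PCoin /\ mem (round p c) = mem c /\ nmem (round p c) p = S (nmem c p).
Proof.
  intros H Ho. unfold next_op in Ho. destruct c as [l1 ph1 m1 n1 k1 s1]; simpl in *.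
  unfold round, step, coin_step, mem_step; simpl; rewrite H; simpl.
  rewrite !upd_same, Ho. simpl. rewrite !upd_same. auto.
Qed.

Lemma round_write p c r x :
  ph c p = PCoin -> next_op p c = OWrite r x ->
  ph (round p c) p = PCoin /\ mem (round p c) = write_mem (mem c) r x /\
  nmem (round p c) p = S (nmem c p) /\
  loc (round p c) p = coin M p (loc c p) (cs p (ncoin c p)) /\
  ncoin (round p c) p = S (ncoin c p).
Proof.
  intros H Ho. unfold next_op in Ho. destruct c as [l1 ph1 m1 n1 k1 s1]; simpl in *.
  unfold round, step, coin_step, mem_step; simpl; rewrite H; simpl.
  rewrite !upd_same, Ho. simpl. rewrite !upd_same. auto.
Qed.

Lemma round_ret p c b :
  ph c p = PCoin -> next_op p c = ORet b ->
  ph (round p c) p = PDone M b (started c (negb p)) /\ mem (round p c) = mem c.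
Proof.
  intros H Ho. unfold next_op in Ho. destruct c as [l1 ph1 m1 n1 k1 s1]; simpl in *.
  unfold round, step, coin_step, mem_step; simpl; rewrite H; simpl.
  rewrite !upd_same, Ho. simpl. rewrite !upd_same. auto.
Qed.

Lemma solo_cases p n c :
  ph c p = PCoin ->
  (exists b o, ph (solo p n c) p = PDone M b o) \/
  (ph (solo p n c) p = PCoin /\ nmem (solo p n c) p = (n + nmem c p)%nat).
Proof.
  revert c; induction n; intros c H; [change (solo p 0 c) with c; auto|rewrite solo_S].
  destruct (next_op p c) as [r | r x | b] eqn:Ho.
  - destruct (round_read p c r H Ho) as (A1 & _ & A3).
    destruct (IHn _ A1) as [A|[B1 B2]]; auto. right; split; auto; lia.
  - destruct (round_write p c r x H Ho) as (A1 & _ & A3 & _).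
    destruct (IHn _ A1) as [A|[B1 B2]]; auto. right; split; auto; lia.
  - destruct (round_ret p c b H Ho) as (A1 & _).
    left. rewrite (solo_done p n _ _ _ A1). eauto.
Qed.

Lemma solo_outcome_round t p c :
  nmem (round p c) p = S (nmem c p) -> (nmem c p < t)%nat ->
  solo_outcome t p (round p c) = solo_outcome t p c.
Proof.
  intros H1 H2. unfold solo_outcome. rewrite H1.
  replace (t - nmem c p)%nat with (S (t - S (nmem c p))) by lia. reflexivity.
Qed.

Lemma solo_outcome_ret t p c b o :
  ph (round p c) p = PDone M b o -> (nmem c p < t)%nat -> solo_outcome t p c = Some b.
Proof.
  intros H1 H2. unfold solo_outcome.
  replace (t - nmem c p)%nat with (S (t - S (nmem c p))) by lia.
  rewrite solo_S, (solo_done p _ _ b o H1), H1. auto.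
Qed.

Lemma solo_outcome_none t p c :
  ph c p = PCoin -> solo_outcome t p c = None -> (t <= nmem (solo p (t - nmem c p) c) p)%nat.
Proof.
  intros H HW. unfold solo_outcome in HW.
  destruct (solo_cases p (t - nmem c p) c H) as [(b & o & A)|[B1 B2]].
  - rewrite A in HW; discriminate.
  - lia.
Qed.

Lemma solo_outcome_some t p c b :
  solo_outcome t p c = Some b -> exists o, ph (solo p (t - nmem c p) c) p = PDone M b o.
Proof.
  unfold solo_outcome. destruct (ph _ p); try discriminate.
  intros H; injection H; intros; subst; eauto.
Qed.

Lemma solo_alone_flag p n c :
  started c (negb p) = false ->
  (ph c p = PCoin \/ exists b, ph c p = PDone M b false) ->
  forall b o, ph (solo p n c) p = PDone M b o -> o = false.
Proof.
  revert c; induction n; intros c Hs Hph b o; [change (solo p 0 c) with c|rewrite solo_S].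
  - destruct Hph as [E|[b' E]]; rewrite E; try discriminate.
    intros Q; injection Q; auto.
  - destruct Hph as [E|[b' E]].
    + assert (P := round_private_other p (negb p) c (no_fixpoint_negb p)).
      injection P; intros A5 _ _ _ _.
      apply IHn; [congruence|].
      destruct (next_op p c) as [r | r x | b0] eqn:Ho.
      * left; apply (round_read p c r E Ho).
      * left; apply (round_write p c r x E Ho).
      * right; exists b0. destruct (round_ret p c b0 E Ho) as (A & _). rewrite A, Hs; auto.
    + rewrite (round_done p c b' false E). apply IHn; eauto.
Qed.

Lemma interleaved_writes_view p c r x r' x' :
  ph c p = PCoin -> ph c (negb p) = PCoin ->
  next_op p c = OWrite r x -> next_op (negb p) c = OWrite r' x' ->
  let seen m := (loc (round p c) p, @PCoin M, m, nmem (round p c) p, ncoin (round p c) p) in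
  view p (round p c) = seen (write_mem (mem c) r x) /\
  view p (round p (round (negb p) c)) = seen (write_mem (write_mem (mem c) r' x') r x) /\
  view p (round (negb p) (round p c)) = seen (write_mem (write_mem (mem c) r x) r' x').
Proof.
  intros Hp Hq Op Oq seen.
  assert (Hn := no_fixpoint_negb p).
  assert (Hn' := neq_negb p).
  assert (Ep := round_private_other p (negb p) c Hn).
  assert (Eq := round_private_other (negb p) p c Hn').
  injection Eq; intros _ Q4 Q3 Q2 Q1.
  destruct (round_write p c r x Hp Op) as (A1 & A2 & A3 & A4 & A5).
  destruct (round_write (negb p) c r' x' Hq Oq) as (_ & B2 & _).
  assert (Op' : next_op p (round (negb p) c) = OWrite r x) by (rewrite next_op_other; auto).
  destruct (round_write p _ r x ltac:(rewrite Q2; auto) Op') as (D1 & D2 & D3 & D4 & D5).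
  assert (Oq' : next_op (negb p) (round p c) = OWrite r' x') by (rewrite next_op_other; auto).
  assert (Hq' : ph (round p c) (negb p) = PCoin) by (injection Ep; intros; congruence).
  destruct (round_write (negb p) _ r' x' Hq' Oq') as (_ & E2 & _).
  assert (Er := round_private_other (negb p) p (round p c) Hn').
  injection Er; intros _ R4 R3 R2 R1.
  unfold seen, view; repeat split; rewrite ?R1, ?R2, ?R3, ?R4, ?E2, ?D1, ?D2, ?D3, ?D4, ?D5,
    ?B2, ?Q1, ?Q3, ?Q4, ?A1, ?A2, ?A3, ?A4, ?A5; auto.
Qed.

End Rounds.

Section Valency.
Context {M : TASImpl} (cs : bool -> nat -> Omega M) (t : nat).

Hypothesis lin : forall l, lin_ok (rounds cs l (init_cfg M)).

Notation C pre := (rounds cs pre (init_cfg M)).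

Definition reaches (c : Cfg M) : Prop := (t <= nmem c false \/ t <= nmem c true)%nat.

Definition short_run : Prop :=
  exists l, (length l <= 2 * t)%nat /\ reaches (C l).

(** The invariant of the construction: after the rounds [pre], both processes
    are about to flip a coin, every round so far was a memory step, neither
    has executed [t] steps, and each, running solo, would return [v]. *)
Record agreeing (pre : list bool) (v : bool) : Prop := {
  ag_coin : forall p, ph (C pre) p = PCoin;
  ag_len : length pre = (nmem (C pre) false + nmem (C pre) true)%nat;
  ag_le : forall p, (nmem (C pre) p <= t)%nat;
  ag_out : forall p, solo_outcome cs t p (C pre) = Some v }.

Lemma solo_reaches pre p :
  ph (C pre) p = PCoin -> length pre = (nmem (C pre) false + nmem (C pre) true)%nat ->
  (forall q, nmem (C pre) q <= t)%nat -> solo_outcome cs t p (C pre) = None -> short_run.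
Proof.
  intros Hph Hlen Hle Hout.
  exists (pre ++ repeat p (t - nmem (C pre) p)). split.
  - rewrite length_app, repeat_length. generalize (Hle false) (Hle true); destruct p; lia.
  - unfold reaches. rewrite rounds_app.
    assert (A := solo_outcome_none cs t p _ Hph Hout). destruct p; auto.
Qed.

Lemma returned_differs pre p v o :
  ph (C pre) p = PDone M v o -> solo_outcome cs t (negb p) (C pre) <> Some v.
Proof.
  intros Hp Hout.
  destruct (solo_outcome_some cs t (negb p) _ v Hout) as [o' Hq].
  set (n := (t - nmem (C pre) (negb p))%nat) in Hq.
  assert (Hp' : ph (solo cs (negb p) n (C pre)) p = PDone M v o).
  { assert (E := solo_private_other cs (negb p) p n (C pre) (neq_negb p)).
    injection E; intros _ _ _ E' _. congruence. }
  destruct (lin (pre ++ repeat (negb p) n)) as [_ L].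
  rewrite rounds_app in L. fold (solo cs (negb p) n (C pre)) in L.
  destruct p; [apply (L v o' v o) | apply (L v o v o')]; auto.
Qed.

Lemma round_bookkeeping pre v p :
  agreeing pre v -> (nmem (C pre) p < t)%nat ->
  ph (C (pre ++ p :: nil)) p = PCoin -> nmem (C (pre ++ p :: nil)) p = S (nmem (C pre) p) ->
  (forall q, ph (C (pre ++ p :: nil)) q = PCoin) /\
  length (pre ++ p :: nil) =
    (nmem (C (pre ++ p :: nil)) false + nmem (C (pre ++ p :: nil)) true)%nat /\
  (forall q, nmem (C (pre ++ p :: nil)) q <= t)%nat.
Proof.
  intros Hag Hlt Hph Hn. rewrite rounds_snoc in *.
  assert (E := round_private_other cs p (negb p) (C pre) (no_fixpoint_negb p)).
  injection E; intros _ _ Hn' Hph' _.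
  assert (Hlen := ag_len _ _ Hag). assert (Hle := ag_le _ _ Hag (negb p)).
  split; [|split].
  - apply (bool_cases p); auto. rewrite Hph'; apply (ag_coin _ _ Hag).
  - rewrite length_app; simpl. destruct p; simpl in *; lia.
  - apply (bool_cases p); lia.
Qed.

Lemma round_cases pre v p :
  agreeing pre v -> (forall q, nmem (C pre) q < t)%nat ->
  (forall v', agreeing (pre ++ p :: nil) v' -> short_run) ->
  short_run \/
  exists r x, next_op cs p (C pre) = OWrite r x /\
              solo_outcome cs t (negb p) (round cs p (C pre)) = Some (negb v).
Proof.
  intros Hag Hlt Rec.
  assert (Hph := ag_coin _ _ Hag p). assert (Hout := ag_out _ _ Hag).
  assert (Hq := no_fixpoint_negb p).
  assert (Hself : nmem (round cs p (C pre)) p = S (nmem (C pre) p) ->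
            solo_outcome cs t p (round cs p (C pre)) = Some v).
  { intros Hn; rewrite solo_outcome_round; auto. }
  assert (Hext : ph (round cs p (C pre)) p = PCoin ->
            nmem (round cs p (C pre)) p = S (nmem (C pre) p) ->
            solo_outcome cs t (negb p) (round cs p (C pre)) = Some v -> short_run).
  { intros Hph' Hn Hother. rewrite <- rounds_snoc in *.
    destruct (round_bookkeeping pre v p Hag (Hlt p) Hph' Hn) as (B1 & B2 & B3).
    apply (Rec v); constructor; auto. apply (bool_cases p); auto. }
  destruct (next_op cs p (C pre)) as [r | r x | b] eqn:Ho.
  - destruct (round_read cs p _ r Hph Ho) as (A1 & A2 & A3).
    left; apply Hext; auto.
    rewrite (solo_outcome_view cs t _ _ _ (round_view_other cs p (negb p) _ Hq A2)); auto.
  - destruct (round_write cs p _ r x Hph Ho) as (A1 & _ & A3 & _).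
    destruct (solo_outcome cs t (negb p) (round cs p (C pre))) as [v'|] eqn:Hother.
    + destruct (bool_dec v' v) as [<-|Hv]; [left; apply Hext; auto|].
      right; exists r, x; split; auto. destruct v, v'; simpl; congruence.
    + left. rewrite <- rounds_snoc in *.
      destruct (round_bookkeeping pre v p Hag (Hlt p) A1 A3) as (B1 & B2 & B3).
      exact (solo_reaches _ (negb p) (B1 _) B2 B3 Hother).
  - destruct (round_ret cs p _ b Hph Ho) as (A1 & A2).
    assert (Hb := solo_outcome_ret cs t p _ b _ A1 (Hlt p)).
    rewrite Hout in Hb; injection Hb; intros <-.
    exfalso; rewrite <- rounds_snoc in A1.
    apply (returned_differs _ p v _ A1). rewrite rounds_snoc.
    rewrite (solo_outcome_view cs t _ _ _ (round_view_other cs p (negb p) _ Hq A2)); auto.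
Qed.

(** The two registers must
    differ (a write to the same register would hide the other's write from
    [p]); the writes then commute, so after both the processes agree on
    [negb v]. *)
Lemma critical_writes pre v p r x r' x' :
  agreeing pre v -> (forall q, nmem (C pre) q < t)%nat ->
  next_op cs p (C pre) = OWrite r x ->
  solo_outcome cs t (negb p) (round cs p (C pre)) = Some (negb v) ->
  next_op cs (negb p) (C pre) = OWrite r' x' ->
  solo_outcome cs t p (round cs (negb p) (C pre)) = Some (negb v) ->
  agreeing (pre ++ p :: negb p :: nil) (negb v).
Proof.
  intros Hag Hlt Op Oq_flip Oq Op_flip.
  set (c := C pre) in *.
  assert (Hph := ag_coin _ _ Hag). assert (Hout := ag_out _ _ Hag). fold c in Hph, Hout.
  destruct (interleaved_writes_view cs p c r x r' x' (Hph p) (Hph (negb p)) Op Oq)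
    as (V0 & V1 & V2).
  assert (Ep := round_private_other cs p (negb p) c (no_fixpoint_negb p)).
  assert (Eq := round_private_other cs (negb p) p c (neq_negb p)).
  injection Ep; intros _ _ P3 P2 _. injection Eq; intros _ _ Q3 _ _.
  destruct (round_write cs p c r x (Hph p) Op) as (A1 & _ & A3 & _).
  destruct (round_write cs (negb p) c r' x' (Hph (negb p)) Oq) as (_ & _ & B3 & _).
  assert (Out1 : solo_outcome cs t p (round cs p (round cs (negb p) c)) = Some (negb v)).
  { rewrite solo_outcome_round; auto; [|rewrite Q3; apply Hlt].
    injection V1; intros _ N1 _ _ _. rewrite N1, A3, Q3; auto. }
  destruct (reg_eq_dec M r r') as [<-|Hr].
  - exfalso.
    rewrite (solo_outcome_view cs t p _ (round cs p c)) in Out1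
      by (rewrite V1, V0, write_mem_overwrite; auto).
    rewrite solo_outcome_round, Hout in Out1; auto. destruct v; discriminate.
  - set (d := round cs (negb p) (round cs p c)).
    assert (Ed := round_private_other cs (negb p) p (round cs p c) (neq_negb p)).
    injection Ed; intros _ _ R3 R2 _.
    destruct (round_write cs (negb p) (round cs p c) r' x' ltac:(rewrite P2; auto)
      ltac:(rewrite next_op_other; auto; apply no_fixpoint_negb)) as (D1 & _ & D3 & _).
    assert (Hlen := ag_len _ _ Hag). assert (Hle := Hlt (negb p)). fold c in Hlen, Hle.
    assert (Ed' : C (pre ++ p :: negb p :: nil) = d) by (rewrite rounds_app; reflexivity).
    constructor; rewrite ?Ed'.
    + apply (bool_cases p); [unfold d; rewrite R2|]; auto.
    + rewrite length_app; simpl. unfold d.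
      generalize (Hlt p); destruct p; simpl in *; lia.
    + apply (bool_cases p); unfold d; [rewrite R3, A3|rewrite D3, P3]; apply Hlt.
    + apply (bool_cases p).
      * rewrite (solo_outcome_view cs t p _ (round cs p (round cs (negb p) c))); auto.
        unfold d; rewrite V1, V2, write_mem_comm; auto.
      * unfold d; rewrite solo_outcome_round; auto; rewrite P3; auto.
Qed.

(** The valency induction: from an agreeing prefix, rounds can be added
    (keeping the agreement) until some process reaches [t]; each added round
    is a memory step, so at most [2t] rounds are needed. *)
Lemma agreeing_short_run k : forall pre v,
  agreeing pre v -> (2 * t <= length pre + k)%nat -> short_run.
Proof.
  induction k as [|k IH]; intros pre v Hag Hk;
    assert (Hlen := ag_len _ _ Hag); assert (Hle := ag_le _ _ Hag);
    generalize (Hle false) (Hle true); intros Hle0 Hle1.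
  all: destruct (Nat.lt_ge_cases (nmem (C pre) false) t) as [L0|L0];
    [destruct (Nat.lt_ge_cases (nmem (C pre) true) t) as [L1|L1]|];
    try solve [exists pre; split; [lia | unfold reaches; auto]]; try lia.
  assert (Hlt : forall q, (nmem (C pre) q < t)%nat) by (intros []; auto).
  assert (Rec : forall p v', agreeing (pre ++ p :: nil) v' -> short_run).
  { intros p v' Hag'. apply (IH _ v' Hag'). rewrite length_app; simpl; lia. }
  destruct (round_cases pre v false Hag Hlt (Rec false)) as [|(r & x & O0 & F0)]; auto.
  destruct (round_cases pre v true Hag Hlt (Rec true)) as [|(r' & x' & O1 & F1)]; auto.
  apply (IH _ _ (critical_writes pre v false r x r' x' Hag Hlt O0 F0 O1 F1)).
  rewrite length_app; simpl; lia.
Qed.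

(** Running solo from the initial configuration, a process can only return
    [false] (0), since the other process has not invoked its operation. *)
Lemma initial_outcome p b : solo_outcome cs t p (init_cfg M) = Some b -> b = false.
Proof.
  intros H. destruct (solo_outcome_some cs t p _ b H) as [o A].
  assert (o = false) by (eapply (solo_alone_flag cs p); [ | | exact A]; simpl; auto).
  subst o. destruct (lin (repeat p (t - nmem (init_cfg M) p))) as [L _]. eapply L; eauto.
Qed.

Lemma short_run_exists : short_run.
Proof.
  assert (E : C nil = init_cfg M) by reflexivity.
  destruct (solo_outcome cs t false (init_cfg M)) as [b0|] eqn:W0;
    [|apply (solo_reaches nil false); rewrite ?E; simpl; auto; lia].
  destruct (solo_outcome cs t true (init_cfg M)) as [b1|] eqn:W1;
    [|apply (solo_reaches nil true); rewrite ?E; simpl; auto; lia].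
  apply (agreeing_short_run (2 * t) nil false); [|simpl; lia].
  constructor; rewrite ?E; simpl; try lia.
  - intros []; reflexivity.
  - intros [].
    + rewrite W1, (initial_outcome true b1 W1); auto.
    + rewrite W0, (initial_outcome false b0 W0); auto.
Qed.

End Valency.

Section Schedules.
Context {M : TASImpl}.

Definition sched_step (sg : Schedule) cs (i : nat) (c : Cfg M) : Cfg M :=
  match sg i with None => c | Some p => step p (cs p (ncoin c p)) c end.

Fixpoint run (sg : Schedule) cs (n i : nat) (c : Cfg M) : Cfg M :=
  match n with O => c | S n => run sg cs n (S i) (sched_step sg cs i c) end.

Lemma run_last sg cs n : forall i (c : Cfg M),
  run sg cs (S n) i c = sched_step sg cs (i + n) (run sg cs n i c).
Proof.
  induction n; intros i c.
  - simpl. rewrite Nat.add_0_r. auto.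
  - change (run sg cs (S (S n)) i c) with (run sg cs (S n) (S i) (sched_step sg cs i c)).
    rewrite IHn. replace (S i + n)%nat with (i + S n)%nat by lia. auto.
Qed.

Lemma exec_run sg cs n : exec M sg cs n = run sg cs n 0 (init_cfg M).
Proof. induction n; auto. rewrite run_last, <- IHn. reflexivity. Qed.

Definition round_schedule (f : nat -> bool) : Schedule := fun i => Some (f (Nat.div2 i)).

Lemma run_round_schedule f cs n : forall k (c : Cfg M),
  run (round_schedule f) cs (2 * n) (2 * k) c = rounds cs (map f (seq k n)) c.
Proof.
  induction n; intros k c; [reflexivity|].
  replace (2 * S n)%nat with (S (S (2 * n))) by lia. cbn [run map seq].
  unfold sched_step at 1 2, round_schedule.
  rewrite Nat.div2_double, Nat.div2_succ_double.
  replace (S (S (2 * k))) with (2 * S k)%nat by lia.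
  rewrite IHn. reflexivity.
Qed.

Definition list_schedule (l : list bool) : Schedule := round_schedule (fun k => nth k l false).

Lemma map_nth_seq (l : list bool) : map (fun k => nth k l false) (seq 0 (length l)) = l.
Proof.
  apply (nth_ext _ _ false false); rewrite ?length_map, ?length_seq; auto.
  intros n Hn.
  rewrite nth_indep with (d' := nth 0 l false) by (rewrite length_map, length_seq; auto).
  rewrite (map_nth (fun k => nth k l false) _ 0%nat), seq_nth; auto.
Qed.

Lemma run_list_schedule (l : list bool) cs (c : Cfg M) :
  run (list_schedule l) cs (2 * length l) 0 c = rounds cs l c.
Proof.
  transitivity (rounds cs (map (fun k => nth k l false) (seq 0 (length l))) c).
  - exact (run_round_schedule (fun k => nth k l false) cs (length l) 0 c).
  - rewrite map_nth_seq; reflexivity.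
Qed.

Lemma lin_rounds (HM : is_TAS M) cs l : lin_ok (rounds cs l (init_cfg M)).
Proof. rewrite <- run_list_schedule, <- exec_run. apply HM. Qed.

End Schedules.

Section Coins.
Context {M : TASImpl}.
Hypothesis Hv : valid_coins M.

Definition mass (n : nat) : R :=
  match enumO M n with Some w => mu M w | None => 0 end.

Definition weighted (F : Omega M -> R) (n : nat) : R :=
  match enumO M n with Some w => mu M w * F w | None => 0 end.

Lemma mass_nonneg n : 0 <= mass n.
Proof. destruct Hv as (Hmu & _). unfold mass; destruct (enumO M n); [apply Hmu | lra]. Qed.

Lemma mass_cv : Un_cv (sum_f_R0 mass) 1.
Proof. apply Hv. Qed.

Lemma mass_partial_bounds N : 0 <= sum_f_R0 mass N <= 1.
Proof.
  split; [apply cond_pos_sum, mass_nonneg|].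
  apply sum_incr; [apply mass_cv | apply mass_nonneg].
Qed.

Lemma weighted_le F G n : (forall w, F w <= G w) -> weighted F n <= weighted G n.
Proof.
  destruct Hv as (Hmu & _). intros H; unfold weighted; destruct (enumO M n); [|lra].
  apply Rmult_le_compat_l; auto.
Qed.

Lemma Ecoin_spec f : (forall w, 0 <= f w <= 1) ->
  0 <= Ecoin M f <= 1 /\ forall N, sum_f_R0 (weighted f) N <= Ecoin M f.
Proof.
  intros Hf. destruct Hv as (Hmu & _).
  assert (Hb : forall n, 0 <= weighted f n <= mass n).
  { intros n; unfold weighted, mass; destruct (enumO M n) as [w|]; [|lra].
    specialize (Hf w); specialize (Hmu w); split; [apply Rmult_le_pos|]; nra. }
  assert (Hpart : forall n, sum_f_R0 (weighted f) n <= 1).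
  { intros n. eapply Rle_trans; [|apply (mass_partial_bounds n)].
    apply sum_Rle; intros; apply Hb. }
  assert (Hgr : Un_growing (sum_f_R0 (weighted f)))
    by (intros m; simpl; generalize (Hb (S m)); lra).
  destruct (growing_cv _ Hgr) as [l Hl]; [exists 1; intros x [n ->]; apply Hpart|].
  assert (Hsum : Un_cv (sum_f_R0 (weighted f)) (Ecoin M f)).
  { unfold Ecoin, psum. apply epsilon_spec. exists l. exact Hl. }
  assert (Hle : forall n, sum_f_R0 (weighted f) n <= Ecoin M f)
    by (intros n; apply sum_incr; auto; intros; apply Hb).
  split; [split|exact Hle].
  - eapply Rle_trans; [|apply (Hle 0%nat)]. apply cond_pos_sum; intros; apply Hb.
  - exact (Rle_cv_lim Hpart Hsum (cv_const 1)).
Qed.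

Definition set_coin (cs : bool -> nat -> Omega M) p k w : bool -> nat -> Omega M :=
  fun q j => if Bool.eqb q p && Nat.eqb j k then w else cs q j.

Lemma set_coin_comm cs p k w q j w' :
  (p, k) <> (q, j) ->
  set_coin (set_coin cs p k w) q j w' = set_coin (set_coin cs q j w') p k w.
Proof.
  intros H. unfold set_coin. apply functional_extensionality; intros x.
  apply functional_extensionality; intros y.
  destruct (Bool.eqb x q && Nat.eqb y j) eqn:E1, (Bool.eqb x p && Nat.eqb y k) eqn:E2; auto.
  apply andb_prop in E1, E2. destruct E1 as [E1 E1'], E2 as [E2 E2'].
  apply eqb_prop in E1, E2. apply Nat.eqb_eq in E1', E2'. subst. congruence.
Qed.

(** Truncated expectation of [G] over the coins at the positions [L] (the
    others fixed as in [base]), each coin ranging over its first [N+1]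
    enumerated outcomes. *)
Fixpoint trunc_exp (N : nat) (base : bool -> nat -> Omega M) (L : list (bool * nat))
  (G : (bool -> nat -> Omega M) -> R) : R :=
  match L with
  | nil => G base
  | (p, k) :: L' => sum_f_R0 (weighted (fun w => trunc_exp N (set_coin base p k w) L' G)) N
  end.

Lemma trunc_exp_swap N base x y L G :
  x <> y -> trunc_exp N base (x :: y :: L) G = trunc_exp N base (y :: x :: L) G.
Proof.
  destruct x as [p k], y as [q j]. intros Hxy. simpl.
  assert (Expand : forall (H : Omega M -> Omega M -> R),
    sum_f_R0 (weighted (fun w => sum_f_R0 (weighted (fun w' => H w w')) N)) N =
    sum_f_R0 (fun n => sum_f_R0 (fun m =>
      match enumO M n, enumO M m with
      | Some w, Some w' => mu M w * mu M w' * H w w'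
      | _, _ => 0 end) N) N).
  { intros H. apply sum_eq; intros n _. unfold weighted. destruct (enumO M n) as [w|].
    - rewrite scal_sum. apply sum_eq; intros m _. destruct (enumO M m); lra.
    - rewrite sum_cte. lra. }
  rewrite 2!Expand, sum_f_R0_swap. apply sum_eq; intros n _. apply sum_eq; intros m _.
  destruct (enumO M n), (enumO M m); try lra.
  rewrite set_coin_comm; auto. lra.
Qed.

Lemma trunc_exp_front N x B G : forall A base, ~ In x A ->
  trunc_exp N base (A ++ x :: B) G = trunc_exp N base (x :: A ++ B) G.
Proof.
  induction A as [|[q j] A IH]; intros base H; simpl; auto.
  transitivity (trunc_exp N base ((q, j) :: x :: A ++ B) G).
  - simpl. apply sum_eq; intros n _. unfold weighted. destruct (enumO M n); auto.
    rewrite IH; auto. intros Hin; apply H; right; auto.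
  - rewrite trunc_exp_swap; auto. intros E; apply H; left; auto.
Qed.

Lemma trunc_exp_ext N L : forall base G H,
  (forall cs, (forall q j, ~ In (q, j) L -> cs q j = base q j) -> G cs = H cs) ->
  trunc_exp N base L G = trunc_exp N base L H.
Proof.
  induction L as [|[p k] L IH]; intros base G H Hyp; simpl; [apply Hyp; auto|].
  apply sum_eq; intros n _. unfold weighted. destruct (enumO M n) as [w|]; auto.
  f_equal. apply IH. intros cs Hcs. apply Hyp. intros q j Hn.
  rewrite Hcs by (intros Hin; apply Hn; right; auto). unfold set_coin.
  destruct (Bool.eqb q p && Nat.eqb j k) eqn:E; auto.
  apply andb_prop in E. destruct E as [E1 E2]. apply eqb_prop in E1. apply Nat.eqb_eq in E2.
  subst. exfalso; apply Hn; left; auto.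
Qed.

Lemma trunc_exp_mono N L : forall base G H,
  (forall cs, G cs <= H cs) -> trunc_exp N base L G <= trunc_exp N base L H.
Proof.
  induction L as [|[p k] L IH]; intros base G H Hyp; simpl; auto.
  apply sum_Rle; intros n _. apply weighted_le; auto.
Qed.

Lemma trunc_exp_plus N L : forall base G H,
  trunc_exp N base L (fun cs => G cs + H cs) = trunc_exp N base L G + trunc_exp N base L H.
Proof.
  induction L as [|[p k] L IH]; intros base G H; simpl; auto.
  rewrite <- plus_sum. apply sum_eq; intros n _.
  unfold weighted; destruct (enumO M n); [rewrite IH|]; lra.
Qed.

Lemma trunc_exp_const N L : forall base c,
  trunc_exp N base L (fun _ => c) = c * sum_f_R0 mass N ^ length L.
Proof.
  induction L as [|[p k] L IH]; intros base c; simpl; [lra|].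
  rewrite (sum_eq _ (fun n => mass n * (c * sum_f_R0 mass N ^ length L))).
  - rewrite <- scal_sum. ring.
  - intros n _. unfold weighted.
    destruct (enumO M n) eqn:E; [rewrite IH|]; unfold mass; rewrite E; ring.
Qed.

End Coins.

Lemma trunc_exp_sum_list {M : TASImpl} {X : Type} N L base (F : list X)
  (G : X -> (bool -> nat -> Omega M) -> R) :
  trunc_exp N base L (fun cs => sum_list F (fun l => G l cs)) =
  sum_list F (fun l => trunc_exp N base L (G l)).
Proof.
  induction F as [|x F IH]; simpl.
  - rewrite trunc_exp_const. ring.
  - rewrite trunc_exp_plus, IH. auto.
Qed.

Section Probability.
Context {M : TASImpl}.
Hypothesis Hv : valid_coins M.
Variables (sg : Schedule) (t : nat).

Definition reached_ind (c : Cfg M) : R :=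
  if (t <=? nmem c false)%nat || (t <=? nmem c true)%nat then 1 else 0.

Lemma reached_ind_bounds c : 0 <= reached_ind c <= 1.
Proof. unfold reached_ind; destruct (_ || _); lra. Qed.

Lemma pv_bounds n : forall i c, 0 <= pv M sg t n i c <= 1.
Proof.
  induction n; intros i c; simpl; [apply reached_ind_bounds|].
  destruct (sg i) as [p|]; auto. destruct (ph c p); auto.
  apply Ecoin_spec; auto.
Qed.

Definition coin_range (p : bool) (k K : nat) : list (bool * nat) :=
  map (pair p) (seq k (K - k)).

Lemma coin_range_cons p k K :
  (k < K)%nat -> coin_range p k K = (p, k) :: coin_range p (S k) K.
Proof.
  intros H. unfold coin_range. replace (K - k)%nat with (S (K - S k)) by lia. reflexivity.
Qed.

Lemma in_coin_range p k K q j : In (q, j) (coin_range p k K) -> q = p /\ (k <= j)%nat.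
Proof.
  unfold coin_range; intros H. apply in_map_iff in H. destruct H as (x & Hx & Hin).
  injection Hx; intros; subst. apply in_seq in Hin. split; auto; lia.
Qed.

Definition pending (K : nat) (c : Cfg M) : list (bool * nat) :=
  coin_range false (ncoin c false) K ++ coin_range true (ncoin c true) K.

Lemma pending_coin_step K p (c : Cfg M) :
  (ncoin c p < K)%nat ->
  exists A B, pending K c = A ++ (p, ncoin c p) :: B /\
    (forall w, pending K (coin_step p w c) = A ++ B) /\ ~ In (p, ncoin c p) (A ++ B).
Proof.
  intros H. unfold pending. cbn [coin_step ncoin].
  destruct p; unfold upd; simpl; rewrite (coin_range_cons _ _ _ H).
  - exists (coin_range false (ncoin c false) K), (coin_range true (S (ncoin c true)) K).
    split; [|split]; auto.
    intros Hin. apply in_app_or in Hin. destruct Hin as [Hin|Hin];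
      apply in_coin_range in Hin; destruct Hin; [discriminate | lia].
  - exists nil, (coin_range false (S (ncoin c false)) K ++ coin_range true (ncoin c true) K).
    split; [|split]; auto.
    simpl; intros Hin. apply in_app_or in Hin. destruct Hin as [Hin|Hin];
      apply in_coin_range in Hin; destruct Hin; [lia | discriminate].
Qed.

(** Independence of the coins: [pv], which flips the coins in the order the
    schedule uses them, dominates the truncated expectation over all pending
    coins of the indicator of the deterministic run. *)
Lemma pv_ge_trunc_exp K N n : forall i (c : Cfg M) base,
  (forall p, ncoin c p + n <= K)%nat ->
  trunc_exp N base (pending K c) (fun cs => reached_ind (run sg cs n i c)) <= pv M sg t n i c.
Proof.
  induction n; intros i c base Hk.
  - simpl. rewrite trunc_exp_const. fold (reached_ind c).
    assert (A := pow_le1 (sum_f_R0 mass N) (length (pending K c)) (mass_partial_bounds Hv N)).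
    assert (B := reached_ind_bounds c). nra.
  - cbn [run pv]. unfold sched_step. destruct (sg i) as [p|].
    2:{ apply IHn. intros p; specialize (Hk p); lia. }
    assert (Hmem : forall d, ncoin d = ncoin c -> pending K d = pending K c)
      by (intros d E; unfold pending; rewrite E; auto).
    unfold step. destruct (ph c p) eqn:Hp.
    2,3: rewrite <- (Hmem (mem_step p c)) by apply mem_step_ncoin;
         apply IHn; intros q; rewrite mem_step_ncoin; specialize (Hk q); lia.
    destruct (pending_coin_step K p c ltac:(specialize (Hk p); lia))
      as (A & B & HA & HB & Hnot).
    rewrite HA, trunc_exp_front by (intros Hin; apply Hnot, in_or_app; auto). simpl.
    destruct (Ecoin_spec Hv (fun w => pv M sg t n (S i) (coin_step p w c))) as [_ HE];
      [intros; apply pv_bounds|].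
    eapply Rle_trans; [|apply (HE N)].
    apply sum_Rle; intros m _. apply (weighted_le Hv). intros w.
    rewrite (trunc_exp_ext N (A ++ B) (set_coin base p (ncoin c p) w) _
      (fun cs => reached_ind (run sg cs n (S i) (coin_step p w c)))).
    + rewrite <- (HB w). apply IHn. intros q.
      cbn [coin_step ncoin]. unfold upd. specialize (Hk q).
      destruct (Bool.eqb q p) eqn:E; [apply eqb_prop in E; subst|]; lia.
    + intros cs Hcs. rewrite (Hcs p (ncoin c p) Hnot). unfold set_coin.
      rewrite eqb_reflx, Nat.eqb_refl. reflexivity.
Qed.

End Probability.

(** A probability distribution has some outcome (needed as a default coin). *)
Lemma coin_inhabited (M : TASImpl) : valid_coins M -> inhabited (Omega M).
Proof.
  intros Hv. apply NNPP; intros Hn.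
  assert (Z : forall N, sum_f_R0 (@mass M) N = 0).
  { intros N. rewrite (sum_eq _ (fun _ => 0)), sum_cte; [ring|].
    intros n _; unfold mass; destruct (enumO M n) as [w|]; auto.
    exfalso; apply Hn; constructor; exact w. }
  assert (Hcv := mass_cv Hv). rewrite (functional_extensionality _ _ Z) in Hcv.
  assert (E := UL_sequence _ _ _ Hcv (cv_const 0)). lra.
Qed.

Section LowerBound.
Context {M : TASImpl} (HM : is_TAS M) (t : nat).

Definition candidates : list (list bool) := all_lists (2 * t).

Definition total_prob : R :=
  sum_list candidates (fun l => prob_by M (list_schedule l) t (4 * t)).

Lemma some_candidate_reaches cs :
  exists l, In l candidates /\
    reached_ind t (run (list_schedule l) cs (4 * t) 0 (init_cfg M)) = 1.
Proof.
  destruct (short_run_exists cs t (lin_rounds HM cs)) as (l0 & Hlen & Hreach).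
  set (l := l0 ++ repeat false (2 * t - length l0)).
  assert (Hl : length l = (2 * t)%nat) by (unfold l; rewrite length_app, repeat_length; lia).
  exists l; split; [unfold candidates; rewrite <- Hl; apply all_lists_complete|].
  replace (4 * t)%nat with (2 * length l)%nat by lia.
  rewrite run_list_schedule. unfold l; rewrite rounds_app.
  set (c0 := rounds cs l0 (init_cfg M)) in *.
  set (c := rounds cs (repeat false (2 * t - length l0)) c0).
  assert (A := rounds_nmem cs (repeat false (2 * t - length l0)) c0). fold c in A.
  unfold reached_ind, reaches in *.
  destruct Hreach as [H|H];
    [replace (t <=? nmem c false)%nat with true
    |replace (t <=? nmem c true)%nat with true; [rewrite orb_true_r|]]; auto;
    symmetry; apply Nat.leb_le; generalize (A false) (A true); lia.
Qed.

Lemma total_prob_ge_trunc (w0 : Omega M) N :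
  sum_f_R0 (@mass M) N ^ length (pending (4 * t) (init_cfg M)) <= total_prob.
Proof.
  set (L := pending (4 * t) (init_cfg M)).
  set (base := fun (_ : bool) (_ : nat) => w0).
  apply Rle_trans with
    (sum_list candidates (fun l => trunc_exp N base L
       (fun cs => reached_ind t (run (list_schedule l) cs (4 * t) 0 (init_cfg M))))).
  - rewrite <- trunc_exp_sum_list, <- (Rmult_1_l (_ ^ _)), <- (trunc_exp_const N L base 1).
    apply trunc_exp_mono; [apply HM|]. intros cs.
    destruct (some_candidate_reaches cs) as (l & Hin & Hl).
    rewrite <- Hl.
    apply (sum_list_ge _ (fun l => reached_ind t (run (list_schedule l) cs (4 * t) 0 (init_cfg M))));
      [intros; apply reached_ind_bounds | exact Hin].
  - apply sum_list_le; intros l _.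
    apply pv_ge_trunc_exp; [apply HM|]. intros p; simpl; lia.
Qed.

(** Letting the truncation grow, the coin masses tend to 1. *)
Lemma total_prob_ge_1 : 1 <= total_prob.
Proof.
  destruct (coin_inhabited M (proj1 HM)) as [w0].
  rewrite <- (pow1 (length (pending (4 * t) (init_cfg M)))).
  apply (Rle_cv_lim (total_prob_ge_trunc w0)); [|apply cv_const].
  apply cv_pow, mass_cv, HM.
Qed.

Lemma good_candidate_exists : exists l, / 4 ^ t <= prob_by M (list_schedule l) t (4 * t).
Proof.
  assert (Hne : candidates <> nil).
  { intros E. assert (A := all_lists_complete (repeat false (2 * t))).
    rewrite repeat_length in A. fold candidates in A. rewrite E in A. destruct A. }
  destruct (sum_list_average _ _ Hne total_prob_ge_1) as (l & _ & Hl).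
  exists l. unfold candidates in Hl. rewrite all_lists_length, pow_INR, pow_mult in Hl.
  replace (INR 2 ^ 2) with 4 in Hl by (simpl; ring). exact Hl.
Qed.

End LowerBound.

Lemma prob_by_lub (M : TASImpl) (Hv : valid_coins M) sg t n :
  exists l, is_lub (fun x => exists n : nat, x = prob_by M sg t n) l /\ prob_by M sg t n <= l.
Proof.
  destruct (completeness (fun x => exists n0 : nat, x = prob_by M sg t n0)) as [l Hl].
  - exists 1. intros x [n0 ->]. apply pv_bounds; auto.
  - exists (prob_by M sg t 0). eauto.
  - exists l. split; auto. apply Hl. eauto.
Qed.

Theorem theorem14 (M : TASImpl) (HM : is_TAS M) (t : nat) :
  exists sg : Schedule, exists l : R,
    is_lub (fun x => exists n : nat, x = prob_by M sg t n) l /\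
    / 4 ^ t <= l.
Proof.
  destruct (good_candidate_exists HM t) as [rs Hrs].
  destruct (prob_by_lub M (proj1 HM) (list_schedule rs) t (4 * t)) as (l & Hlub & Hle).
  exists (list_schedule rs), l. split; [exact Hlub | lra].
Qed.
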